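(* For integers $r,r^{\star},n$ with $1\le r^{\star}\le r<n$, there exist $X,Z\in\mathbb{R}^{n\times r}$ with $\mathrm{rank}(Z)=r^{\star}$ and $XX^{T}\ne ZZ^{T}$ such that $\delta(X,Z)\le1/(1+1/\sqrt{r-r^{\star}+1})$.
   Context: A linear map $\mathcal{A}:\mathbb{R}^{n\times n}\to\mathbb{R}^{m}$ satisfies $(\delta,p)$-RIP if $0\le\delta<1$ and there is $\nu>0$ such that $(1-\delta)\|E\|_{F}^{2}\le\frac{1}{\nu}\|\mathcal{A}(E)\|^{2}\le(1+\delta)\|E\|_{F}^{2}$ for all $E\in\mathbb{R}^{n\times n}$ with $\mathrm{rank}(E)\le p$. For $X,Z\in\mathbb{R}^{n\times r}$ with $XX^{T}\ne ZZ^{T}$ and $r^{\star}=\mathrm{rank}(Z)$, the threshold RIP function $\delta(X,Z)$ is the infimum of all $\delta$ for which there exist $m\ge1$ and a linear map $\mathcal{A}:\mathbb{R}^{n\times n}\to\mathbb{R}^{m}$ satisfying $(\delta,r+r^{\star})$-RIP such that the function $f_{\mathcal{A}}(U)=\|\mathcal{A}(UU^{T}-ZZ^{T})\|^{2}$ on $\mathbb{R}^{n\times r}$ satisfies $\nabla f_{\mathcal{A}}(X)=0$ and $\nabla^{2}f_{\mathcal{A}}(X)\succeq0$. *)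

From HB Require Import structures.
From mathcomp Require Import all_boot all_order all_algebra.
From mathcomp Require Import all_classical all_reals all_analysis.
Set Implicit Arguments. Unset Strict Implicit. Unset Printing Implicit Defensive.
Import Order.TTheory GRing.Theory Num.Theory.
Local Open Scope ring_scope.
Local Open Scope classical_set_scope.

Definition frob2 {R : realType} {n : nat} (E : 'M[R]_n) : R :=
  \sum_(i < n) \sum_(j < n) E i j ^+ 2.

Definition vnorm2 {R : realType} {m : nat} (v : 'rV[R]_m) : R :=
  \sum_(k < m) v ord0 k ^+ 2.

Definition RIP {R : realType} {n m : nat}
    (A : {linear 'M[R]_n -> 'rV[R]_m}) (delta : R) (p : nat) : Prop :=
  0 <= delta /\ delta < 1 /\
  exists nu : R, 0 < nu /\
    forall E : 'M[R]_n, (\rank E <= p)%N ->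
      (1 - delta) * frob2 E <= vnorm2 (A E) / nu /\
      vnorm2 (A E) / nu <= (1 + delta) * frob2 E.

Definition fA {R : realType} {n r m : nat}
    (A : {linear 'M[R]_n -> 'rV[R]_m}) (Z U : 'M[R]_(n, r)) : R :=
  vnorm2 (A (U *m U^T - Z *m Z^T)).

(* First-order condition nabla f(X) = 0, written through directional
   derivatives: d/dt f(X + tV) at t = 0 vanishes for every direction V. *)
Definition grad_zero {R : realType} {n r : nat}
    (f : 'M[R]_(n, r) -> R) (X : 'M[R]_(n, r)) : Prop :=
  forall V : 'M[R]_(n, r), derive1 (fun t : R => f (X + t *: V)) 0 = 0.

(* Second-order condition nabla^2 f(X) >= 0 (positive semidefinite):
   the quadratic form V |-> d^2/dt^2 f(X + tV) at t = 0 is nonnegative. *)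
Definition hess_psd {R : realType} {n r : nat}
    (f : 'M[R]_(n, r) -> R) (X : 'M[R]_(n, r)) : Prop :=
  forall V : 'M[R]_(n, r),
    0 <= derive1 (derive1 (fun t : R => f (X + t *: V))) 0.

Definition threshold_set {R : realType} {n r : nat} (X Z : 'M[R]_(n, r)) : set R :=
  [set delta | exists (m : nat) (A : {linear 'M[R]_n -> 'rV[R]_m}),
      (1 <= m)%N /\ RIP A delta (r + \rank Z)%N /\
      grad_zero (fA A Z) X /\ hess_psd (fA A Z) X].

(* delta(X,Z): infimum taken in the extended reals (inf of empty set = +oo) *)
Definition threshold_RIP {R : realType} {n r : nat} (X Z : 'M[R]_(n, r)) : \bar R :=
  ereal_inf [set (d%:E)%E | d in threshold_set X Z].

(* Put k := r - rs + 1, s := sqrt k and t := 1 / (1 + s).  Z is the partial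
   identity of rank rs, and X is chosen so that X X^T agrees with Z Z^T except
   at index 0, where it vanishes, and at the k indices rs..r, where it equals t;
   thus M := X X^T - Z Z^T = diag(-1, 0, ..., 0, t, ..., t, 0, ..., 0).
   The operator A keeps the diagonal of E, scales its off-diagonal entries by
   sqrt L with L := 1 + 2 s, and appends the k numbers sqrt s E_ii + E_00 / sqrt s
   for i in rs..r.  Then |E|^2 <= |A E|^2 <= L |E|^2, i.e. RIP with constant
   s / (1 + s) = 1 / (1 + 1 / sqrt k), and <A M, A F> = - L t F_00 for all F.
   Along X + u V the loss is |A M + u A D + u^2 A (V V^T)|^2 with
   D := X V^T + V X^T.  Row 0 of X vanishes, so D_00 = 0 and the gradient
   2 <A M, A D> is zero; and row and column 0 of D carry the weight L, so
   |A D|^2 >= 2 L |row 0 of D|^2 >= 2 L t (V V^T)_00, which makes the Hessian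
   2 |A D|^2 - 4 L t (V V^T)_00 nonnegative. *)

From HB Require Import structures.
From mathcomp Require Import all_boot all_order all_algebra.
From mathcomp Require Import all_classical all_reals all_analysis.
From mathcomp Require Import ring lra.
Set Implicit Arguments. Unset Strict Implicit. Unset Printing Implicit Defensive.
Import Order.TTheory GRing.Theory Num.Theory.
Local Open Scope ring_scope.

Section LossAlongLines.
Variable R : realType.

Definition vdot (m : nat) (u v : 'rV[R]_m) : R := \sum_k u ord0 k * v ord0 k.

Lemma vnorm2_vdot m (v : 'rV[R]_m) : vnorm2 v = vdot v v.
Proof. by rewrite /vnorm2 /vdot; apply: eq_bigr => k _; rewrite expr2. Qed.

Lemma derive1_horner0 (p : {poly R}) : derive1 (horner p) 0 = p`_1.
Proof. by rewrite -derivE horner_coef0 coef_deriv. Qed.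

Lemma derive2_horner0 (p : {poly R}) :
  derive1 (derive1 (horner p)) 0 = p`_2 *+ 2.
Proof. by rewrite -!derivE horner_coef0 !coef_deriv. Qed.

Lemma vnorm2_quadratic_curve m (u v w : 'rV[R]_m) :
  (fun t => vnorm2 (u + t *: v + t ^+ 2 *: w)) =
  horner ((vnorm2 u)%:P + (2 * vdot u v) *: 'X
          + (vnorm2 v + 2 * vdot u w) *: 'X^2 + (2 * vdot v w) *: 'X^3
          + vnorm2 w *: 'X^4).
Proof.
apply/funext => t.
rewrite !hornerD !hornerZ hornerC !hornerXn hornerX !vnorm2_vdot /vdot.
rewrite !mulr_sumr mulrDl !mulr_suml -!big_split /=.
by apply: eq_bigr => k _; rewrite !mxE; ring.
Qed.

Lemma derive1_vnorm2_quadratic_curve m (u v w : 'rV[R]_m) :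
  derive1 (fun t => vnorm2 (u + t *: v + t ^+ 2 *: w)) 0 = 2 * vdot u v.
Proof.
rewrite vnorm2_quadratic_curve derive1_horner0.
by rewrite !coefD !coefZ coefC !coefXn coefX /=; ring.
Qed.

Lemma derive2_vnorm2_quadratic_curve m (u v w : 'rV[R]_m) :
  derive1 (derive1 (fun t => vnorm2 (u + t *: v + t ^+ 2 *: w))) 0 =
  2 * vnorm2 v + 4 * vdot u w.
Proof.
rewrite vnorm2_quadratic_curve derive2_horner0.
by rewrite !coefD !coefZ coefC !coefXn coefX /= mulr2n; ring.
Qed.

Lemma gram_line n r (X V Z : 'M[R]_(n, r)) (t : R) :
  (X + t *: V) *m (X + t *: V)^T - Z *m Z^T =
  (X *m X^T - Z *m Z^T) + t *: (X *m V^T + V *m X^T) + t ^+ 2 *: (V *m V^T).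
Proof.
rewrite linearD linearZ /= mulmxDl !mulmxDr -!scalemxAl -!scalemxAr !scalerA.
by rewrite scalerDr expr2; apply/matrixP => i j; rewrite !mxE; ring.
Qed.

Variables (n r m : nat) (A : {linear 'M[R]_n -> 'rV[R]_m}) (X Z V : 'M[R]_(n, r)).

Lemma fA_line (t : R) : fA A Z (X + t *: V) =
  vnorm2 (A (X *m X^T - Z *m Z^T) + t *: A (X *m V^T + V *m X^T)
          + t ^+ 2 *: A (V *m V^T)).
Proof. by rewrite /fA gram_line !linearD !linearZ. Qed.

Lemma derive1_fA_line : derive1 (fun t => fA A Z (X + t *: V)) 0 =
  2 * vdot (A (X *m X^T - Z *m Z^T)) (A (X *m V^T + V *m X^T)).
Proof.
by rewrite (funext fA_line) derive1_vnorm2_quadratic_curve.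
Qed.

Lemma derive2_fA_line : derive1 (derive1 (fun t => fA A Z (X + t *: V))) 0 =
  2 * vnorm2 (A (X *m V^T + V *m X^T))
  + 4 * vdot (A (X *m X^T - Z *m Z^T)) (A (V *m V^T)).
Proof.
by rewrite (funext fA_line) derive2_vnorm2_quadratic_curve.
Qed.

End LossAlongLines.

Lemma sum_ord_eq_nat (V : nmodType) (N m : nat) (F : nat -> V) :
  \sum_(i < N) (if i == m :> nat then F i else 0) = if (m < N)%N then F m else 0.
Proof. by rewrite -big_mkcond big_ord1_eq. Qed.

Lemma vdot_mxvec (R : realType) p q (M N : 'M[R]_(p, q)) :
  vdot (mxvec M) (mxvec N) = \sum_i \sum_j M i j * N i j.
Proof.
rewrite /vdot (reindex _ (curry_mxvec_bij _ _)) /= pair_bigA.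
by apply: eq_bigr => -[i j] _ /=; rewrite !mxvecE.
Qed.

Section RipOperator.
Variables (R : realType) (n : nat) (G : {set 'I_n.+1}).

Definition sG : R := Num.sqrt #|G|%:R.
Definition rhoG : R := Num.sqrt sG.
Definition tG : R := (1 + sG)^-1.
Definition LG : R := 1 + 2 * sG.

Definition wgt (i j : 'I_n.+1) : R := if i == j then 1 else LG.

Definition ycoord (E : 'M[R]_n.+1) (i : 'I_n.+1) : R := rhoG * E i i + E 0 0 / rhoG.

Definition rip_mx (E : 'M[R]_n.+1) : 'M[R]_(n.+1, n.+1 + 1) :=
  row_mx (\matrix_(i, j) (Num.sqrt (wgt i j) * E i j))
         (\col_i (if i \in G then ycoord E i else 0)).

Definition rip_op (E : 'M[R]_n.+1) : 'rV[R]_(n.+1 * (n.+1 + 1)) := mxvec (rip_mx E).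

Lemma rip_op_is_linear : linear rip_op.
Proof.
move=> c E F; rewrite /rip_op -linearP; congr mxvec.
apply/matrixP => i j; rewrite !mxE; case: splitP => j' _; rewrite !mxE /ycoord.
  by ring.
by case: (i \in G); rewrite ?mxE; ring.
Qed.

HB.instance Definition _ :=
  GRing.isLinear.Build R 'M[R]_n.+1 'rV[R]_(n.+1 * (n.+1 + 1)) _ rip_op rip_op_is_linear.

Lemma wgt_ge1 i j : 1 <= wgt i j.
Proof.
rewrite /wgt; case: eqP => // _; rewrite /LG lerDl mulr_ge0 ?sqrtr_ge0 //.
Qed.

Lemma vdot_rip_op (E F : 'M[R]_n.+1) : vdot (rip_op E) (rip_op F) =
  \sum_i \sum_j wgt i j * E i j * F i j + \sum_(i in G) ycoord E i * ycoord F i.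
Proof.
rewrite vdot_mxvec [X in _ = _ + X]big_mkcond -big_split /=; apply: eq_bigr => i _.
rewrite big_split_ord big_ord1 /= /rip_mx; congr (_ + _).
  apply: eq_bigr => j _; rewrite !row_mxEl !mxE.
  have w2 := sqr_sqrtr (le_trans ler01 (wgt_ge1 i j)).
  by rewrite -[in RHS]w2; ring.
by rewrite !row_mxEr !mxE; case: (i \in G); rewrite ?mulr0.
Qed.

Hypothesis card_G_gt0 : (0 < #|G|)%N.
Hypothesis ord0_notin_G : ord0 \notin G.

Lemma sG_gt0 : 0 < sG. Proof. by rewrite sqrtr_gt0 ltr0n. Qed.
Lemma sqr_sG : sG ^+ 2 = #|G|%:R. Proof. by rewrite sqr_sqrtr // ler0n. Qed.
Lemma rhoG_gt0 : 0 < rhoG. Proof. by rewrite sqrtr_gt0 sG_gt0. Qed.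
Lemma sqr_rhoG : rhoG ^+ 2 = sG. Proof. by rewrite sqr_sqrtr // ltW // sG_gt0. Qed.
Lemma tG_gt0 : 0 < tG. Proof. by rewrite invr_gt0; have := sG_gt0; lra. Qed.
Lemma tG_le1 : tG <= 1. Proof. by rewrite invf_le1; have := sG_gt0; lra. Qed.

Lemma sum_const_G x : \sum_(i in G) x = x * sG ^+ 2.
Proof. by rewrite sumr_const sqr_sG mulr_natr. Qed.

Lemma frob2_le_vnorm2_rip_op (E : 'M[R]_n.+1) : frob2 E <= vnorm2 (rip_op E).
Proof.
rewrite vnorm2_vdot vdot_rip_op -[frob2 E]addr0; apply: lerD.
  apply: ler_sum => i _; apply: ler_sum => j _.
  by rewrite -mulrA -expr2 ler_peMl ?sqr_ge0 ?wgt_ge1.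
by apply: sumr_ge0 => i _; rewrite -expr2 sqr_ge0.
Qed.

Lemma sum_ycoord_sqr_le (E : 'M[R]_n.+1) : \sum_(i in G) ycoord E i ^+ 2 <=
  2 * sG * (E 0 0 ^+ 2 + \sum_(i in G) E i i ^+ 2).
Proof.
have rho0 : rhoG != 0 by rewrite gt_eqF ?rhoG_gt0.
rewrite -subr_ge0.
have -> : 2 * sG * (E 0 0 ^+ 2 + \sum_(i in G) E i i ^+ 2) - \sum_(i in G) ycoord E i ^+ 2
    = \sum_(i in G) (rhoG * E i i - E 0 0 / rhoG) ^+ 2.
  have termE i : (rhoG * E i i - E 0 0 / rhoG) ^+ 2 =
                 2 * sG * E i i ^+ 2 - ycoord E i ^+ 2 + 2 * E 0 0 ^+ 2 / sG.
    by rewrite /ycoord -sqr_rhoG; field.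
  rewrite (eq_bigr _ (fun i _ => termE i)) big_split sum_const_G sumrB -mulr_sumr /=.
  by field; rewrite gt_eqF ?sG_gt0.
by apply: sumr_ge0 => i _; rewrite sqr_ge0.
Qed.

Lemma sum_diag_sqr_ge (E : 'M[R]_n.+1) :
  E 0 0 ^+ 2 + \sum_(i in G) E i i ^+ 2 <= \sum_i E i i ^+ 2.
Proof.
rewrite [X in _ <= X](bigID (mem G)) /= addrC lerD2r (bigD1 ord0) //= lerDl.
by apply: sumr_ge0 => i _; rewrite sqr_ge0.
Qed.

Lemma LG_frob2E (E : 'M[R]_n.+1) : LG * frob2 E =
  \sum_i \sum_j wgt i j * E i j * E i j + 2 * sG * \sum_i E i i ^+ 2.
Proof.
rewrite /frob2 !mulr_sumr -big_split; apply: eq_bigr => i _ /=.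
rewrite (bigD1 i) //= [in RHS](bigD1 i) //= mulrDr mulr_sumr /wgt eqxx.
rewrite [X in _ = _ + X + _](eq_bigr (fun j => LG * E i j ^+ 2)).
  by rewrite /LG; ring.
by move=> j /negPf; rewrite eq_sym => ->; ring.
Qed.

Lemma vnorm2_rip_op_le (E : 'M[R]_n.+1) : vnorm2 (rip_op E) <= LG * frob2 E.
Proof.
rewrite vnorm2_vdot vdot_rip_op LG_frob2E lerD2l.
under eq_bigr do rewrite -expr2.
apply: le_trans (sum_ycoord_sqr_le E) _.
by rewrite ler_wpM2l ?sum_diag_sqr_ge // mulr_ge0 ?ltW ?sG_gt0.
Qed.

Lemma RIP_rip_op p : RIP rip_op (sG / (1 + sG)) p.
Proof.
have s0 := sG_gt0; have s1 : 0 < 1 + sG by lra.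
split; first by rewrite divr_ge0 ?ltW.
split; first by rewrite ltr_pdivrMr // mul1r; lra.
exists (1 + sG); split => // E _; split.
  rewrite ler_pdivlMr // (_ : _ * _ * _ = frob2 E); last by field; rewrite gt_eqF.
  exact: frob2_le_vnorm2_rip_op.
rewrite ler_pdivrMr // (_ : _ * _ * _ = LG * frob2 E).
  exact: vnorm2_rip_op_le.
by rewrite /LG; field; rewrite gt_eqF.
Qed.

Definition gap_mx : 'M[R]_n.+1 :=
  diag_mx (\row_i ((if i \in G then tG else 0) - (i == 0)%:R)).

Lemma gap_mxE i j :
  gap_mx i j = ((if i \in G then tG else 0) - (i == 0)%:R) *+ (i == j).
Proof. by rewrite !mxE. Qed.

Lemma ycoord_gap i : i \in G -> ycoord gap_mx i = rhoG * tG - 1 / rhoG.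
Proof.
move=> iG; rewrite /ycoord !gap_mxE !eqxx iG (negPf ord0_notin_G).
have -> : (i == 0) = false by apply: contraTF iG => /eqP ->.
by rewrite /=; ring.
Qed.

Lemma vdot_rip_op_gap (F : 'M[R]_n.+1) :
  vdot (rip_op gap_mx) (rip_op F) = - (LG * tG) * F 0 0.
Proof.
have rho0 : rhoG != 0 by rewrite gt_eqF ?rhoG_gt0.
have s1 : 1 + rhoG ^+ 2 != 0 by rewrite gt_eqF // ltr_pwDl ?sqr_ge0.
rewrite vdot_rip_op.
under eq_bigr => i _.
  rewrite (bigD1 i) //= big1 => [|j /negPf ji]; last first.
    by rewrite gap_mxE [i == j]eq_sym ji mulr0n; ring.
  rewrite addr0 /wgt gap_mxE eqxx mul1r mulr1n mulrBl.
  over.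
have sum_G_part : \sum_i (if i \in G then tG else 0) * F i i = tG * \sum_(i in G) F i i.
  rewrite [in RHS]big_mkcond mulr_sumr; apply: eq_bigr => i _.
  by case: ifP; rewrite ?mul0r ?mulr0.
have sum_0_part : \sum_i (i == 0)%:R * F i i = F 0 0.
  by rewrite (bigD1 ord0) //= big1 ?mul1r ?addr0 // => i /negPf ->; rewrite mul0r.
under [X in _ + X = _]eq_bigr => i iG do rewrite ycoord_gap // /ycoord mulrDr.
rewrite sumrB sum_G_part sum_0_part big_split sum_const_G -!mulr_sumr /=.
by rewrite /LG /tG -sqr_rhoG; field; rewrite rho0 s1.
Qed.

Lemma vnorm2_rip_op_ge_row0 (D : 'M[R]_n.+1) : D^T = D -> D 0 0 = 0 ->
  2 * LG * \sum_j D 0 j ^+ 2 <= vnorm2 (rip_op D).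
Proof.
move=> Dsym D00.
have wD_ge0 i j : 0 <= wgt i j * D i j * D i j.
  by rewrite -mulrA mulr_ge0 ?(le_trans ler01 (wgt_ge1 i j)) // -expr2 sqr_ge0.
have wDT i : wgt i 0 * D i 0 * D i 0 = wgt 0 i * D 0 i * D 0 i.
  by rewrite -{1 2}Dsym mxE /wgt eq_sym.
have row0 : LG * \sum_j D 0 j ^+ 2 = \sum_j wgt 0 j * D 0 j * D 0 j.
  rewrite mulr_sumr; apply: eq_bigr => j _.
  by rewrite /wgt; case: eqP => [<-|_]; rewrite ?D00; ring.
rewrite vnorm2_vdot vdot_rip_op -[X in X <= _]addr0 lerD //; last first.
  by apply: sumr_ge0 => i _; rewrite -expr2 sqr_ge0.
rewrite [X in _ <= X](bigD1 ord0) //= -mulrA mulr_natl mulr2n row0 lerD //.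
rewrite (bigD1 ord0) //= D00 !mulr0 add0r.
apply: ler_sum => i _; rewrite -wDT (bigD1 ord0) //= lerDl.
exact: sumr_ge0.
Qed.

End RipOperator.

Section Construction.
Variables (R : realType) (n r rs : nat).
Hypotheses (rs_gt0 : (0 < rs)%N) (rs_le_r : (rs <= r)%N) (r_le_n : (r <= n)%N).

Definition tail_idx : {set 'I_n.+1} := [set i : 'I_n.+1 | (rs <= i <= r)%N].

Lemma card_tail_idx : #|tail_idx| = (r - rs).+1.
Proof.
rewrite cardsE -sum1_card.
rewrite (eq_bigl (fun i : 'I_n.+1 => (i < r.+1) && (rs <= i))%N); last first.
  by move=> i /=; rewrite andbC.
rewrite -(big_geq_mkord rs n.+1 (fun i => i < r.+1)%N (fun _ => 1%N)).
rewrite -(big_nat_widen rs r.+1 n.+1 xpredT (fun _ => 1%N)) //.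
by rewrite sum_nat_const_nat muln1 subSn.
Qed.

Lemma ord0_notin_tail_idx : ord0 \notin tail_idx.
Proof. by rewrite inE /= leqNgt rs_gt0. Qed.

Lemma card_tail_idx_gt0 : (0 < #|tail_idx|)%N.
Proof. by rewrite card_tail_idx. Qed.

Local Notation s := (sG R tail_idx).
Local Notation t := (tG R tail_idx).

Lemma t_gt0 : 0 < t. Proof. exact: tG_gt0 card_tail_idx_gt0. Qed.
Lemma t_le1 : t <= 1. Proof. exact: tG_le1 card_tail_idx_gt0. Qed.

Definition xval (i : nat) : R := if (rs <= i)%N then Num.sqrt t else 1.

Definition Xcrit : 'M[R]_(n.+1, r) :=
  \matrix_(i, c) (if i == c.+1 :> nat then xval i else 0).

Definition Zcrit : 'M[R]_(n.+1, r) := pid_mx rs.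

Lemma Xcrit_row0 c : Xcrit 0 c = 0.
Proof. by rewrite mxE. Qed.

Lemma sqr_xval i : xval i ^+ 2 = if (rs <= i)%N then t else 1.
Proof.
by rewrite /xval; case: ifP; rewrite ?expr1n // sqr_sqrtr // ltW // t_gt0.
Qed.

Lemma gram_Xcrit i j : (Xcrit *m Xcrit^T) i j =
  if (0 < i <= r)%N && (i == j) then xval i ^+ 2 else 0.
Proof.
rewrite mxE; case: i => [[|i] /= lti].
  by rewrite big1 // => c _; rewrite !mxE mul0r.
pose F c := xval c.+1 * (if j == c.+1 :> nat then xval j else 0).
rewrite (eq_bigr (fun c : 'I_r => if c == i :> nat then F c else 0)); last first.
  move=> c _; rewrite !mxE eqSS [i == _]eq_sym.
  by case: eqP => [ci|_]; rewrite ?mul0r // /F ci.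
rewrite sum_ord_eq_nat /F [j == _ :> nat]eq_sym.
case: (i < r)%N => //=; rewrite -[Ordinal lti == j]/(i.+1 == j :> nat).
by case: eqP => [<-|]; rewrite ?mulr0 ?expr2.
Qed.

Lemma gram_trXcrit : Xcrit^T *m Xcrit = diag_mx (\row_c xval c.+1 ^+ 2).
Proof.
apply/matrixP => c c'; rewrite !mxE.
pose F i := xval i * (if i == c'.+1 :> nat then xval i else 0).
rewrite (eq_bigr (fun i : 'I_n.+1 => if i == c.+1 :> nat then F i else 0)); last first.
  by move=> i _; rewrite !mxE; case: eqP; rewrite ?mul0r.
rewrite sum_ord_eq_nat /F ltnS (leq_trans (ltn_ord c) r_le_n) eqSS.
rewrite -[c == c' :> nat]/(c == c').
by case: (c == c'); rewrite ?mulr0 ?expr2.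
Qed.

Lemma gram_Zcrit : Zcrit *m Zcrit^T = pid_mx rs.
Proof. by rewrite /Zcrit tr_pid_mx pid_mx_id. Qed.

Lemma gap_crit : Xcrit *m Xcrit^T - Zcrit *m Zcrit^T = gap_mx R tail_idx.
Proof.
apply/matrixP => i j; rewrite gram_Zcrit mxE gram_Xcrit !mxE inE.
have [<-|ne] := eqVneq i j; last first.
  by rewrite andbF val_eqE (negPf ne) subrr.
rewrite eqxx mulr1n andbT sqr_xval.
case: i => [[|i] lti] /=; first by rewrite rs_gt0 leqNgt rs_gt0 /= sub0r.
case: (leqP i.+1 r) => hr; case: (leqP rs i.+1) => hrs /=; rewrite ?subrr //.
by have := leq_trans hrs rs_le_r; rewrite ltnNge (ltnW hr).
Qed.

Section Tangent.
Variable V : 'M[R]_(n.+1, r).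
Local Notation D := (Xcrit *m V^T + V *m Xcrit^T).

Lemma tangent_crit_tr : D^T = D.
Proof. by rewrite linearD /= !trmx_mul !trmxK addrC. Qed.

Lemma tangent_crit_row0 j : D 0 j = (V *m Xcrit^T) 0 j.
Proof.
rewrite mxE [X in X + _]mxE big1 ?add0r // => c _.
by rewrite Xcrit_row0 mul0r.
Qed.

Lemma tangent_crit00 : D 0 0 = 0.
Proof. by rewrite tangent_crit_row0 mxE big1 // => c _; rewrite mxE Xcrit_row0 mulr0. Qed.

Lemma tangent_crit_row0_ge : t * (V *m V^T) 0 0 <= \sum_j D 0 j ^+ 2.
Proof.
have -> : \sum_j D 0 j ^+ 2 = (V *m (Xcrit^T *m Xcrit) *m V^T) 0 0.
  rewrite (_ : V *m _ *m V^T = (V *m Xcrit^T) *m (V *m Xcrit^T)^T).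
    by rewrite mxE; apply: eq_bigr => j _; rewrite tangent_crit_row0 expr2 !mxE.
  by rewrite trmx_mul trmxK !mulmxA.
rewrite gram_trXcrit mul_mx_diag !mxE mulr_sumr; apply: ler_sum => c _.
have tx : t <= xval c.+1 ^+ 2 by rewrite sqr_xval; case: ifP => // _; exact: t_le1.
rewrite !mxE -subr_ge0.
have -> : V 0 c * xval c.+1 ^+ 2 * V 0 c - t * (V 0 c * V 0 c) =
          (xval c.+1 ^+ 2 - t) * V 0 c ^+ 2 by ring.
by rewrite mulr_ge0 ?subr_ge0 ?sqr_ge0.
Qed.

End Tangent.

Local Notation A := (@rip_op R n tail_idx).

Lemma gram_crit_neq : Xcrit *m Xcrit^T != Zcrit *m Zcrit^T.
Proof.
rewrite -subr_eq0 gap_crit; apply/eqP => /matrixP/(_ 0 0).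
rewrite gap_mxE !mxE (negPf ord0_notin_tail_idx) eqxx /= sub0r => /eqP.
by rewrite oppr_eq0 oner_eq0.
Qed.

Lemma grad_zero_crit : grad_zero (fA A Zcrit) Xcrit.
Proof.
move=> V; rewrite derive1_fA_line gap_crit.
rewrite vdot_rip_op_gap ?card_tail_idx_gt0 ?ord0_notin_tail_idx //.
by rewrite tangent_crit00 !mulr0.
Qed.

Lemma hess_psd_crit : hess_psd (fA A Zcrit) Xcrit.
Proof.
move=> V; rewrite derive2_fA_line gap_crit.
rewrite vdot_rip_op_gap ?card_tail_idx_gt0 ?ord0_notin_tail_idx //.
have row0 := vnorm2_rip_op_ge_row0 tail_idx (tangent_crit_tr V) (tangent_crit00 V).
have L0 : 0 <= LG R tail_idx by rewrite /LG addr_ge0 ?mulr_ge0 ?sqrtr_ge0.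
have := ler_wpM2l L0 (tangent_crit_row0_ge V).
nra.
Qed.

Lemma threshold_RIP_crit :
  (threshold_RIP Xcrit Zcrit <= (1 / (1 + 1 / Num.sqrt (r - rs).+1%:R))%:E)%E.
Proof.
have s0 : 0 < s by exact: sG_gt0 card_tail_idx_gt0.
apply: ereal_inf_lbound; exists (s / (1 + s)).
  exists (n.+1 * (n.+1 + 1))%N, A; split; first by rewrite muln_gt0.
  split; first exact: (RIP_rip_op R card_tail_idx_gt0 ord0_notin_tail_idx _).
  by split; [exact: grad_zero_crit | exact: hess_psd_crit].
rewrite /sG card_tail_idx in s0 *; congr (_%:E); field.
by rewrite !gt_eqF // addr_gt0.
Qed.

End Construction.

Theorem proposition8 (R : realType) (n r rs : nat) :
  (1 <= rs)%N -> (rs <= r)%N -> (r < n)%N ->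
  exists X Z : 'M[R]_(n, r),
    \rank Z = rs /\ X *m X^T != Z *m Z^T /\
    (threshold_RIP X Z <= (1 / (1 + 1 / Num.sqrt ((r - rs).+1)%:R))%:E)%E.
Proof.
case: n => [|n] rs_gt0 rs_le_r r_lt_n; first by [].
exists (Xcrit R n r rs), (Zcrit R n r rs); split.
  by rewrite rank_pid_mx // (leq_trans rs_le_r (ltnW r_lt_n)).
split; first exact: gram_crit_neq.
exact: threshold_RIP_crit.
Qed.
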